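(* Let $\mathcal{A}=(Q,q_0,\Delta,F)$ be a probabilistic automaton and $\mathcal{G}$ a set of limit-words. Then: (i) if $\mathcal{G}$ is consistent with $\mathcal{A}$ and contains a value $1$ witness, then $\mathrm{val}(\mathcal{A})=1$; (ii) if $\mathcal{G}$ is complete for $\mathcal{A}$ and $\mathrm{val}(\mathcal{A})=1$, then $\mathcal{G}$ contains a value $1$ witness. In particular, if $\mathcal{G}$ is both consistent with and complete for $\mathcal{A}$, then $\mathrm{val}(\mathcal{A})=1$ if and only if $\mathcal{G}$ contains a value $1$ witness.
   Context: Fix a finite alphabet $A$. A probabilistic automaton is $\mathcal{A}=(Q,q_0,\Delta,F)$ with $Q$ finite, initial state $q_0$, accepting states $F\subseteq Q$, and $\Delta: Q\times A\to\mathcal{D}(Q)$. For $a\in A$ let $M_a(s,t)=\Delta(s,a)(t)$, for $u=a_0\cdots a_{n-1}$ let $M_u=M_{a_0}\cdots M_{a_{n-1}}$ (identity for the empty word), and $\mathbb{P}_{\mathcal{A}}(s\xrightarrow{u}t)=M_u(s,t)$. $\mathbb{P}_{\mathcal{A}}(u)=\sum_{t\in F}\mathbb{P}_{\mathcal{A}}(q_0\xrightarrow{u}t)$ and $\mathrm{val}(\mathcal{A})=\sup_{u\in A^*}\mathbb{P}_{\mathcal{A}}(u)$. A limit-word is a map $\mathbf{u}:Q\times Q\to\{0,1\}$ such that every $s$ has some $t$ with $\mathbf{u}(s,t)=1$. A sequence of words $(u_n)$ reifies $\mathbf{u}$ if for all $s,t$, $\mathbb{P}_{\mathcal{A}}(s\xrightarrow{u_n}t)$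 converges and $\mathbf{u}(s,t)=1\iff\lim_n\mathbb{P}_{\mathcal{A}}(s\xrightarrow{u_n}t)>0$. A set $\mathcal{G}$ of limit-words is consistent with $\mathcal{A}$ if every $\mathbf{u}\in\mathcal{G}$ is reified by some sequence of words. $\mathcal{G}$ is complete for $\mathcal{A}$ if for every sequence of words $(u_n)_{n\in\mathbb{N}}$ there exists $\mathbf{u}\in\mathcal{G}$ such that for all $s,t$: $\limsup_n\mathbb{P}_{\mathcal{A}}(s\xrightarrow{u_n}t)=0\Rightarrow\mathbf{u}(s,t)=0$. A value $1$ witness is a limit-word $\mathbf{u}$ such that for all states $t$, $\mathbf{u}(q_0,t)=1$ implies $t\in F$. *)

From mathcomp Require Import all_boot all_order all_algebra.
From mathcomp Require Import all_classical all_reals all_analysis.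
Set Implicit Arguments. Unset Strict Implicit. Unset Printing Implicit Defensive.
Import Order.TTheory GRing.Theory Num.Theory.
Import numFieldNormedType.Exports.
Local Open Scope classical_set_scope.
Local Open Scope ring_scope.

Record PA (R : realType) (A Q : finType) := {
  pa_init : Q;
  pa_delta : Q -> A -> Q -> R;
  pa_final : {set Q};
  pa_delta_ge0 : forall s a t, 0 <= pa_delta s a t;
  pa_delta_sum1 : forall s a, \sum_(t : Q) pa_delta s a t = 1
}.

Section Defs.
Variables (R : realType) (A Q : finType) (aut : PA R A Q).

(* P(s --u--> t) = M_u(s,t), with M_{a u} = M_a M_u and M_[::] = identity *)
Fixpoint pa_path (s : Q) (u : seq A) (t : Q) : R :=
  match u with
  | [::] => if s == t then 1 else 0
  | a :: u' => \sum_(r : Q) pa_delta aut s a r * pa_path r u' t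
  end.

Definition pa_accept (u : seq A) : R :=
  \sum_(t in pa_final aut) pa_path (pa_init aut) u t.

Definition pa_val : R := sup (range pa_accept).

Definition limit_word (w : Q -> Q -> bool) : Prop :=
  forall s, exists t, w s t.

Definition reifies (un : nat -> seq A) (w : Q -> Q -> bool) : Prop :=
  forall s t,
    cvgn (fun n => pa_path s (un n) t) /\
    (w s t <-> 0 < limn (fun n => pa_path s (un n) t)).

Definition consistent (G : set (Q -> Q -> bool)) : Prop :=
  forall w, G w -> exists un : nat -> seq A, reifies un w.

Definition complete (G : set (Q -> Q -> bool)) : Prop :=
  forall un : nat -> seq A, exists w, G w /\
    forall s t, limn_sup (fun n => pa_path s (un n) t) = 0 -> w s t = false.

Definition value1_witness (w : Q -> Q -> bool) : Prop :=
  limit_word w /\ forall t, w (pa_init aut) t -> t \in pa_final aut.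

End Defs.

From mathcomp Require Import all_boot all_order all_algebra.
From mathcomp Require Import all_classical all_reals all_analysis.
Import Order.TTheory GRing.Theory Num.Theory.
Import numFieldNormedType.Exports.
Local Open Scope classical_set_scope.
Local Open Scope ring_scope.

(* Every M_u is row-stochastic, so P(u) = 1 minus the mass that u sends from
   q0 to rejecting states.  (i) Along a sequence reifying a value 1 witness,
   the mass on each rejecting state tends to 0, hence P(u_n) tends to 1.
   (ii) If val = 1, pick u_n with P(u_n) > 1 - 1/(n+1); then the mass on each
   rejecting state is below 1/(n+1), so its limsup vanishes, and the
   limit-word that completeness provides for (u_n) is a value 1 witness. *)

Section ProbabilisticAutomaton.
Variables (R : realType) (A Q : finType) (aut : PA R A Q).

Local Notation q0 := (pa_init aut).
Local Notation F := (pa_final aut).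

Lemma pa_path_ge0 u s t : 0 <= pa_path aut s u t.
Proof.
elim: u s => [|a u IHu] s /=; first by case: eqP.
by apply: sumr_ge0 => r _; rewrite mulr_ge0 ?pa_delta_ge0.
Qed.

Lemma pa_path_sum1 u s : \sum_t pa_path aut s u t = 1.
Proof.
elim: u s => [|a u IHu] s /=.
  by rewrite (bigD1 s) //= eqxx big1 ?addr0 // => t /negPf; rewrite eq_sym => ->.
rewrite exchange_big /= -(pa_delta_sum1 aut s a); apply: eq_bigr => r _.
by rewrite -mulr_sumr IHu mulr1.
Qed.

Lemma pa_acceptE u :
  pa_accept aut u = 1 - \sum_(t | t \notin F) pa_path aut q0 u t.
Proof. by rewrite -(pa_path_sum1 u q0) (bigID (mem F)) /= addrK. Qed.

Lemma pa_accept_le1 u : pa_accept aut u <= 1.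
Proof.
by rewrite pa_acceptE lerBlDr lerDl sumr_ge0 // => t _; rewrite pa_path_ge0.
Qed.

Lemma pa_path_rejectE u t :
  t \notin F -> pa_path aut q0 u t <= 1 - pa_accept aut u.
Proof.
move=> tNF; rewrite pa_acceptE opprB addrC subrK (bigD1 t tNF) /= lerDl.
by rewrite sumr_ge0 // => r _; rewrite pa_path_ge0.
Qed.

Lemma has_sup_pa_accept : has_sup (range (pa_accept aut)).
Proof.
split; first by exists (pa_accept aut [::]), [::].
by exists 1 => _ [u _ <-]; exact: pa_accept_le1.
Qed.

Lemma pa_val_le1 : pa_val aut <= 1.
Proof.
apply: ge_sup; first by exists (pa_accept aut [::]), [::].
by move=> _ [u _ <-]; exact: pa_accept_le1.
Qed.

Lemma cvg_pa_accept1 (un : nat -> seq A) :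
  (forall t, t \notin F -> pa_path aut q0 (un n) t @[n --> \oo] --> (0 : R)) ->
  pa_accept aut (un n) @[n --> \oo] --> (1 : R).
Proof.
move=> reject0.
have sum0 : \sum_(t | t \notin F) pa_path aut q0 (un n) t @[n --> \oo] --> (0 : R).
  have := cvg_big (x0 := 0) (r := index_enum Q) add_continuous _ reject0.
  by rewrite big1 //; apply.
rewrite -[1 : R]subr0; under eq_fun do rewrite pa_acceptE.
exact: cvgB (cvg_cst _) sum0.
Qed.

Lemma pa_val_eq1 (un : nat -> seq A) :
  pa_accept aut (un n) @[n --> \oo] --> (1 : R) -> pa_val aut = 1.
Proof.
move=> accept1; apply/eqP; rewrite eq_le pa_val_le1 /=.
apply: (cvgr_to_le accept1); apply: nearW => n.
by apply: sup_upper_bound; [exact: has_sup_pa_accept | exists (un n)].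
Qed.

Lemma pa_val1_approx :
  pa_val aut = 1 ->
  exists un : nat -> seq A, forall n, 1 - n.+1%:R^-1 < pa_accept aut (un n).
Proof.
move=> val1.
suff /choice[un accept_big] : forall n, exists u, 1 - n.+1%:R^-1 < pa_accept aut u.
  by exists un.
move=> n.
have [_ [u _ <-]] := sup_adherent (harmonic_gt0 n) has_sup_pa_accept.
by rewrite /pa_val in val1; rewrite val1; exists u.
Qed.

Lemma cvg_pa_path_reject0 {un : nat -> seq A} {t} :
  (forall n, 1 - n.+1%:R^-1 < pa_accept aut (un n)) -> t \notin F ->
  pa_path aut q0 (un n) t @[n --> \oo] --> (0 : R).
Proof.
move=> accept_big tNF.
apply: (@squeeze_cvgr _ _ _ _ (fun=> 0) (@harmonic R)); last exact: cvg_harmonic.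
- apply: nearW => n; rewrite pa_path_ge0 /=.
  apply: le_trans (pa_path_rejectE (un n) t tNF) _.
  by rewrite lerBlDr addrC -lerBlDr; exact/ltW/accept_big.
- exact: cvg_cst.
Qed.

Lemma reifies_limn_eq0 {un : nat -> seq A} {w s t} :
  reifies aut un w -> ~~ w s t -> limn (fun n => pa_path aut s (un n) t) = 0.
Proof.
move=> /(_ s t) [cvg_st wE] /negP wN; apply/eqP; rewrite eq_le.
rewrite limr_ge //; last by apply: nearW => n; exact: pa_path_ge0.
by rewrite andbT leNgt; apply/negP => /wE.
Qed.

Lemma consistent_value1 (G : set (Q -> Q -> bool)) :
  consistent aut G -> (exists w, G w /\ value1_witness aut w) -> pa_val aut = 1.
Proof.
move=> consG [w [Gw [_ witness]]]; have [un reif] := consG w Gw.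
apply: (@pa_val_eq1 un); apply: cvg_pa_accept1 => t tNF.
have wN : ~~ w q0 t by apply: contra tNF; exact: witness.
have [cvg_t _] := reif q0 t.
by rewrite -(reifies_limn_eq0 reif wN).
Qed.

Lemma complete_value1 (G : set (Q -> Q -> bool)) :
  (forall w, G w -> limit_word w) ->
  complete aut G -> pa_val aut = 1 -> exists w, G w /\ value1_witness aut w.
Proof.
move=> limG compG /pa_val1_approx [un accept_big].
have [w [Gw wN]] := compG un.
exists w; split => //; split; first exact: limG.
move=> t; apply: contraTT => tNF; apply/negPf/wN.
have reject0 := cvg_pa_path_reject0 accept_big tNF.
by rewrite cvg_limn_supE ?(cvg_lim _ reject0) //; apply/cvg_ex; exists 0.
Qed.

End ProbabilisticAutomaton.

Theorem lemma2p9 (R : realType) (A Q : finType) (aut : PA R A Q)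
    (G : set (Q -> Q -> bool)) (HG : forall w, G w -> limit_word w) :
  (consistent aut G -> (exists w, G w /\ value1_witness aut w) -> pa_val aut = 1) /\
  (complete aut G -> pa_val aut = 1 -> exists w, G w /\ value1_witness aut w) /\
  (consistent aut G -> complete aut G ->
     (pa_val aut = 1 <-> exists w, G w /\ value1_witness aut w)).
Proof.
have part1 := @consistent_value1 R A Q aut G.
have part2 := @complete_value1 R A Q aut G HG.
split; first exact: part1.
split; first exact: part2.
by move=> consG compG; split; [exact: part2 | exact: part1].
Qed.
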